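(* Let $\mu>1/2$, $0<\nu<1/2$. (1) For every $g\in X$ and all $x\in\mathbb{R}$, $$|h^{-1}(x)|\le \tfrac1\nu |x|^\nu(x^2+1)^{\frac12(\mu-\nu)}e^{\|g\|_\infty},$$ $$|h^{-1}(x)|\ge e^{-(\mu-1)}|x|^\nu(x^2+1)^{\frac12(\mu-\nu)}e^{\fint_0^x g}\ge e^{-(\mu-1)}|x|^\nu(x^2+1)^{\frac12(\mu-\nu)}e^{-\|g\|_\infty}.$$ (2) For every $g\in X_1$ and all $x\in\mathbb{R}\setminus\{0\}$, $$e^{1-\nu-6(\mu-\nu)}|x|^{\nu-1}(x^2+1)^{\frac12(\mu-\nu)}e^{g(x)}\le \frac{h^{-1}(x)}{x}\le \tfrac1\nu |x|^{\nu-1}(x^2+1)^{\frac12(\mu-\nu)}e^{g(x)}.$$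
   Context: $X=\{g\in C(\mathbb{R})\cap L^\infty(\mathbb{R}) \text{ real}:\ \lim_{x\to\pm\infty}g(x)=0\}$ with norm $\|g\|_\infty$. For $g\in X$ let $G(x)=g(x)+\frac12(\mu-\nu)\ln(x^2+1)$, and $X_1=\{g\in X: G\text{ is even and }0\le G(x)-G(y)\le(\mu-\nu)(\ln\frac xy+2)\text{ for all }0\le y\le x\}$ (the upper bound being vacuous when $y=0$). For $g\in X$, $h^{-1}:\mathbb{R}\to\mathbb{R}$ is defined by $h^{-1}(0)=0$, $(h^{-1})'(x)=|x|^{\nu-1}(x^2+1)^{(\mu-\nu)/2}e^{g(x)}$ ($x\ne0$). For an interval $I$, $\fint_I g=\frac1{|I|}\int_I g$, and $\fint_0^x g$ denotes the average of $g$ over the interval with endpoints $0$ and $x$. *)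

From Stdlib Require Import Reals Lra.
Open Scope R_scope.

(* |x|^a, with the convention |0|^a = 0 (used only for a > 0 at x = 0). *)
Definition powabs (x a : R) : R :=
  if Req_EM_T x 0 then 0 else Rpower (Rabs x) a.

Definition inX (g : R -> R) : Prop :=
  continuity g /\
  (exists M, forall x, Rabs (g x) <= M) /\
  (forall eps, 0 < eps -> exists A, forall x, A < Rabs x -> Rabs (g x) < eps).

Lemma inX_cont (g : R -> R) : inX g -> continuity g.
Proof. intros [H _]; exact H. Qed.

Definition is_supnorm (g : R -> R) (N : R) : Prop :=
  is_lub (fun y => exists x, y = Rabs (g x)) N.

Definition integ (f : R -> R) (Hf : continuity f) (a b : R) : R :=
  match Rle_dec a b with
  | left H => RiemannInt (@continuity_implies_RiemannInt f a b H (fun x _ => Hf x))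
  | right H => - RiemannInt (@continuity_implies_RiemannInt f b a
                  (Rlt_le _ _ (Rnot_le_lt _ _ H)) (fun x _ => Hf x))
  end.

Definition avg0 (f : R -> R) (Hf : continuity f) (x : R) : R :=
  if Req_EM_T x 0 then f 0 else integ f Hf 0 x / x.

Definition Gfun (mu nu : R) (g : R -> R) (x : R) : R :=
  g x + / 2 * (mu - nu) * ln (x ^ 2 + 1).

Definition inX1 (mu nu : R) (g : R -> R) : Prop :=
  inX g /\
  (forall x, Gfun mu nu g (- x) = Gfun mu nu g x) /\
  (forall x y, 0 <= y -> y <= x ->
     0 <= Gfun mu nu g x - Gfun mu nu g y /\
     (0 < y -> Gfun mu nu g x - Gfun mu nu g y <= (mu - nu) * (ln (x / y) + 2))).

(* H is h^{-1}: H(0)=0, H continuous (at 0), H'(x) = |x|^(nu-1)(x^2+1)^((mu-nu)/2) e^(g x), x<>0 *)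
Definition is_hinv (mu nu : R) (g : R -> R) (H : R -> R) : Prop :=
  H 0 = 0 /\ continuity_pt H 0 /\
  (forall x, x <> 0 ->
     derivable_pt_lim H x
       (powabs x (nu - 1) * Rpower (x ^ 2 + 1) ((mu - nu) / 2) * exp (g x))).

From Stdlib Require Import Reals Lra.
From Coquelicot Require Import Coquelicot.
Open Scope R_scope.

(* Everything rests on one comparison principle (compare_from_zero): two
   functions that tend to 0 at 0+ and whose derivatives are ordered on (0,x]
   are ordered at x.  For t > 0 we write t (h^{-1})'(t) = hinv_rate t =
   t^nu (t^2+1)^((mu-nu)/2) e^(g t), and compare h^{-1} with barriers:
   - part (1), upper bound: the power barrier t^nu (x^2+1)^((mu-nu)/2) e^N/nu;
   - part (1), lower bound: the barrier e^(1-mu) t^nu (t^2+1)^((mu-nu)/2)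
     e^(average of g on [0,t]), whose derivative is dominated thanks to
     1 + v <= e^v (average_weight_ineq);
   - part (2): with G = g + (mu-nu)/2 ln(t^2+1) one has hinv_rate = t^nu e^G;
     monotonicity of G gives the upper bound (power barrier t^nu) and the
     logarithmic growth bound on G the lower one (power barrier t^mu).
   Every bound is proved for x > 0 first; negative x reduce to that case
   through the reflection x |-> -h^{-1}(-x), the inverse profile of g(-.).
   The hypotheses mu > 1/2 > nu of the theorem are only used through
   0 < nu <= mu, which is the generality of the intermediate lemmas. *)

Lemma exp_le x y : x <= y -> exp x <= exp y.
Proof. intros [h | ->]; [left; apply exp_increasing; exact h | lra]. Qed.

Lemma Rpower_pos x p : 0 < Rpower x p.
Proof. apply exp_pos. Qed.

Lemma powabs_pos x p : 0 < x -> powabs x p = Rpower x p.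
Proof.
  intros hx. unfold powabs. destruct (Req_EM_T x 0); [lra|].
  rewrite Rabs_right by lra. reflexivity.
Qed.

Lemma powabs_opp x p : powabs (- x) p = powabs x p.
Proof.
  unfold powabs. destruct (Req_EM_T (- x) 0), (Req_EM_T x 0); try lra.
  rewrite Rabs_Ropp. reflexivity.
Qed.

Lemma Rpower_minus_1 x p : 0 < x -> Rpower x (p - 1) = Rpower x p / x.
Proof.
  intros hx. unfold Rpower. replace ((p - 1) * ln x) with (p * ln x + - ln x) by ring.
  rewrite exp_plus, exp_Ropp, exp_ln by exact hx. reflexivity.
Qed.

Lemma nondecreasing_of_derive_nonneg (K K' : R -> R) a b : a <= b ->
  (forall t, a <= t <= b -> is_derive K t (K' t) /\ 0 <= K' t) -> K a <= K b.
Proof.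
  intros [hab | <-] hd; [| lra].
  destruct (MVT_gen K a b K') as [c [hc he]];
    rewrite ?Rmin_left, ?Rmax_right in * by lra.
  - intros t ht. apply hd; lra.
  - intros t ht. apply continuity_pt_filterlim, (ex_derive_continuous K).
    exists (K' t). apply hd; lra.
  - destruct (hd c hc) as [_ hpos]. nra.
Qed.

Definition vanishes_at_0 (f : R -> R) : Prop :=
  forall d, 0 < d -> exists eta, 0 < eta /\ forall e, 0 < e < eta -> Rabs (f e) < d.

(* Comparison principle: if A and B vanish at 0+ and A' <= B' on (0,x], then A
   x <= B x, because B - A is nondecreasing on (0,x] and tends to 0 at 0+. *)
Lemma compare_from_zero (A B A' B' : R -> R) x : 0 < x ->
  vanishes_at_0 A -> vanishes_at_0 B ->
  (forall t, 0 < t <= x -> is_derive A t (A' t) /\ is_derive B t (B' t) /\ A' t <= B' t) ->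
  A x <= B x.
Proof.
  intros hx hA hB hd. apply Rnot_lt_le. intros hlt.
  destruct (hA ((A x - B x) / 2)) as [etaA [hetaA hsmallA]]; [lra|].
  destruct (hB ((A x - B x) / 2)) as [etaB [hetaB hsmallB]]; [lra|].
  set (e := Rmin (Rmin etaA etaB) x / 2).
  assert (he : 0 < e /\ e < etaA /\ e < etaB /\ e < x).
  { unfold e. pose proof (Rmin_l etaA etaB). pose proof (Rmin_r etaA etaB).
    pose proof (Rmin_l (Rmin etaA etaB) x). pose proof (Rmin_r (Rmin etaA etaB) x).
    assert (0 < Rmin (Rmin etaA etaB) x) by (repeat apply Rmin_glb_lt; lra). lra. }
  assert (hmono : B e - A e <= B x - A x).
  { apply (nondecreasing_of_derive_nonneg (fun t => B t - A t) (fun t => B' t - A' t)); [lra|].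
    intros t ht. destruct (hd t) as [hdA [hdB hle]]; [lra|].
    split; [apply (is_derive_minus B A); assumption | lra]. }
  specialize (hsmallA e ltac:(lra)). specialize (hsmallB e ltac:(lra)).
  apply Rabs_def2 in hsmallA, hsmallB. lra.
Qed.

Lemma vanishes_of_continuity (f : R -> R) :
  continuity_pt f 0 -> f 0 = 0 -> vanishes_at_0 f.
Proof.
  intros hc h0 d hd. destruct (hc d hd) as [eta [heta hclose]].
  exists eta. split; [exact heta|]. intros e he.
  specialize (hclose e). simpl in hclose. unfold R_dist in hclose.
  rewrite h0, !Rminus_0_r, Rabs_right in hclose by lra.
  apply hclose. split; [split; [exact I | lra] | lra].
Qed.

Lemma vanishes_of_power_bound (f : R -> R) p C : 0 < p -> 0 <= C ->
  (forall e, 0 < e <= 1 -> Rabs (f e) <= C * Rpower e p) -> vanishes_at_0 f.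
Proof.
  intros hp hC hbound d hd.
  set (r := exp (ln (d / (C + 1)) / p)).
  assert (hr : Rpower r p = d / (C + 1)).
  { unfold r, Rpower. rewrite ln_exp.
    replace (p * (ln (d / (C + 1)) / p)) with (ln (d / (C + 1))) by (field; lra).
    apply exp_ln, Rdiv_lt_0_compat; lra. }
  exists (Rmin 1 r). split; [apply Rmin_glb_lt; [lra | apply exp_pos]|].
  intros e he. pose proof (Rmin_l 1 r). pose proof (Rmin_r 1 r).
  assert (hsmall : Rpower e p < d / (C + 1)).
  { rewrite <- hr. apply Rlt_Rpower_l; lra. }
  assert (hbd : d / (C + 1) * (C + 1) = d) by (field; lra).
  pose proof (hbound e ltac:(lra)). nra.
Qed.

Lemma power_barrier p m : 0 < p ->
  vanishes_at_0 (fun t => m / p * Rpower t p) /\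
  forall t, 0 < t -> is_derive (fun t => m / p * Rpower t p) t (m * Rpower t p / t).
Proof.
  intros hp. split.
  - apply (vanishes_of_power_bound _ p (Rabs (m / p)) hp (Rabs_pos _)).
    intros e _. rewrite Rabs_mult, (Rabs_right (Rpower e p)); [lra|].
    apply Rle_ge, Rlt_le, Rpower_pos.
  - intros t ht. unfold Rpower. auto_derive; [lra|]. field. lra.
Qed.

(* t times the derivative of h^{-1} at t > 0. *)
Definition hinv_rate (mu nu : R) (g : R -> R) (t : R) : R :=
  Rpower t nu * Rpower (t ^ 2 + 1) ((mu - nu) / 2) * exp (g t).

Lemma hinv_rate_eq mu nu g t : 0 < t ->
  powabs t (nu - 1) * Rpower (t ^ 2 + 1) ((mu - nu) / 2) * exp (g t) = hinv_rate mu nu g t / t.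
Proof.
  intros ht. rewrite powabs_pos, Rpower_minus_1 by exact ht.
  unfold hinv_rate. field. lra.
Qed.

Section InverseProfile.
Variables (mu nu : R) (g H : R -> R).
Hypothesis hH : is_hinv mu nu g H.

Lemma hinv_derive t : 0 < t -> is_derive H t (hinv_rate mu nu g t / t).
Proof.
  intros ht. destruct hH as [_ [_ hd]]. apply is_derive_Reals.
  rewrite <- hinv_rate_eq by exact ht. apply hd. lra.
Qed.

Lemma hinv_vanishes : vanishes_at_0 H.
Proof. destruct hH as [h0 [hc _]]. exact (vanishes_of_continuity H hc h0). Qed.

Lemma hinv_le_power p m x : 0 < p -> 0 < x ->
  (forall t, 0 < t <= x -> hinv_rate mu nu g t <= m * Rpower t p) ->
  H x <= m / p * Rpower x p.
Proof.
  intros hp hx hrate. destruct (power_barrier p m hp) as [hvan hder].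
  apply (compare_from_zero H _ (fun t => hinv_rate mu nu g t / t) (fun t => m * Rpower t p / t)
           x hx hinv_vanishes hvan).
  intros t ht. split; [|split].
  - apply hinv_derive. lra.
  - apply hder. lra.
  - apply Rmult_le_compat_r; [apply Rlt_le, Rinv_0_lt_compat; lra | apply hrate; exact ht].
Qed.

Lemma power_le_hinv p m x : 0 < p -> 0 < x ->
  (forall t, 0 < t <= x -> m * Rpower t p <= hinv_rate mu nu g t) ->
  m / p * Rpower x p <= H x.
Proof.
  intros hp hx hrate. destruct (power_barrier p m hp) as [hvan hder].
  apply (compare_from_zero _ H (fun t => m * Rpower t p / t) (fun t => hinv_rate mu nu g t / t)
           x hx hvan hinv_vanishes).
  intros t ht. split; [|split].
  - apply hder. lra.
  - apply hinv_derive. lra.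
  - apply Rmult_le_compat_r; [apply Rlt_le, Rinv_0_lt_compat; lra | apply hrate; exact ht].
Qed.

End InverseProfile.

(* Reflection: x |-> -h^{-1}(-x) is the inverse profile of g(-.); this reduces
   negative arguments to positive ones. *)
Lemma hinv_reflect mu nu g g' H : (forall t, g' t = g (- t)) ->
  is_hinv mu nu g H -> is_hinv mu nu g' (fun t => - H (- t)).
Proof.
  intros hg' [h0 [hc hd]]. split; [|split].
  - rewrite Ropp_0, h0. ring.
  - apply continuity_pt_opp, continuity_pt_comp; [apply continuity_pt_opp, continuity_pt_id|].
    rewrite Ropp_0. exact hc.
  - intros t ht. apply is_derive_Reals.
    assert (hD := hd (- t) ltac:(lra)). apply is_derive_Reals in hD.
    auto_derive; [eexists; exact hD|].
    replace (Derive (fun x => H x) (- t)) with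
      (powabs (- t) (nu - 1) * Rpower ((- t) ^ 2 + 1) ((mu - nu) / 2) * exp (g (- t)))
      by (symmetry; apply is_derive_unique; exact hD).
    rewrite powabs_opp, hg'.
    replace ((- t) ^ 2) with (t ^ 2) by ring. ring.
Qed.

Section ContinuousAverages.
Variable g : R -> R.
Hypothesis hg : continuity g.

Lemma ex_RInt_cont a b : ex_RInt g a b.
Proof.
  apply (ex_RInt_continuous (V := R_CompleteNormedModule)).
  intros t _. apply continuity_pt_filterlim, hg.
Qed.

Lemma average_bound N x : (forall t, Rabs (g t) <= N) -> 0 < x -> Rabs (RInt g 0 x / x) <= N.
Proof.
  intros hN hx. unfold Rdiv. rewrite Rabs_mult, Rabs_inv, (Rabs_right x) by lra.
  apply Rmult_le_reg_r with x; [exact hx|]. rewrite Rmult_assoc, Rinv_l by lra.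
  rewrite Rmult_1_r, Rmult_comm.
  replace (x * N) with ((x - 0) * N) by ring.
  apply abs_RInt_le_const; [lra | apply ex_RInt_cont | intros t _; apply hN].
Qed.

End ContinuousAverages.

Lemma average_eq g (hg : continuity g) x : x <> 0 -> avg0 g hg x = RInt g 0 x / x.
Proof.
  intros hx. unfold avg0, integ. destruct (Req_EM_T x 0); [contradiction|].
  destruct (Rle_dec 0 x); rewrite <- RInt_Reals; [reflexivity|].
  rewrite (opp_RInt_swap (V := R_CompleteNormedModule)); [reflexivity|].
  apply ex_RInt_cont, hg.
Qed.

Lemma RInt_reflect g x : continuity g ->
  RInt (fun t => g (- t)) 0 (- x) = - RInt g 0 x.
Proof.
  intros hg. apply is_RInt_unique.
  assert (hI : is_RInt g (- 0) (- - x) (RInt g 0 x)).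
  { rewrite Ropp_0, Ropp_involutive. apply (RInt_correct (V := R_CompleteNormedModule)).
    apply ex_RInt_cont, hg. }
  apply (is_RInt_ext (fun t => opp (opp (g (- t))))); [intros t _; apply opp_opp|].
  exact (is_RInt_opp _ _ _ _ (is_RInt_comp_opp _ _ _ _ hI)).
Qed.

(* The pointwise inequality behind the lower bound of part (1): for s in [0,1],
   e^(1-mu) (nu + (mu-nu) s + u) <= e^(1-mu) e^(mu-1+u) = e^u, by 1 + v <= e^v. *)
Lemma average_weight_ineq mu nu s u : nu <= mu -> 0 <= s <= 1 ->
  exp (- (mu - 1)) * (nu + (mu - nu) * s + u) <= exp u.
Proof.
  intros hnm hs.
  replace (exp u) with (exp (- (mu - 1)) * exp (mu + u - 1))
    by (rewrite <- exp_plus; f_equal; ring).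
  apply Rmult_le_compat_l; [apply Rlt_le, exp_pos|].
  pose proof (exp_ineq1_le (mu + u - 1)). nra.
Qed.

Definition average_barrier (mu nu : R) (g : R -> R) (t : R) : R :=
  exp (- (mu - 1)) * Rpower t nu * Rpower (t ^ 2 + 1) ((mu - nu) / 2) * exp (RInt g 0 t / t).

(* Its derivative; the factor t^2/(t^2+1) in [0,1] comes from the weight
   (t^2+1)^((mu-nu)/2). *)
Lemma average_barrier_derive mu nu g t : continuity g -> 0 < t ->
  is_derive (average_barrier mu nu g) t
    (average_barrier mu nu g t
       * (nu + (mu - nu) * (t ^ 2 / (t ^ 2 + 1)) + g t - RInt g 0 t / t) / t).
Proof.
  intros hg ht. unfold average_barrier, Rpower. auto_derive.
  - repeat split; try lra; try nra;
      [apply ex_RInt_cont, hg | apply filter_forall; intros; apply hg].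
  - set (r := RInt _ 0 t). replace (t * (t * 1) + 1) with (t ^ 2 + 1) by ring.
    unfold Rdiv. field. split; [lra | nra].
Qed.

Lemma average_barrier_small mu nu g N e : nu <= mu -> continuity g ->
  (forall t, Rabs (g t) <= N) -> 0 < e <= 1 ->
  Rabs (average_barrier mu nu g e)
    <= exp (- (mu - 1)) * Rpower 2 ((mu - nu) / 2) * exp N * Rpower e nu.
Proof.
  intros hnm hg hN he. unfold average_barrier.
  rewrite Rabs_right by (apply Rle_ge, Rlt_le; repeat apply Rmult_lt_0_compat; apply exp_pos).
  apply Rle_trans with (exp (- (mu - 1)) * Rpower e nu * Rpower 2 ((mu - nu) / 2) * exp N);
    [| right; ring].
  apply Rmult_le_compat; try (apply Rlt_le; repeat apply Rmult_lt_0_compat; apply exp_pos).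
  - apply Rmult_le_compat_l; [apply Rlt_le, Rmult_lt_0_compat; apply exp_pos|].
    apply Rle_Rpower_l; [lra | nra].
  - apply exp_le. pose proof (average_bound g hg N e hN (proj1 he)) as hb.
    apply Rabs_le_between in hb. lra.
Qed.

(* Its derivative is dominated by that of h^{-1}: this is average_weight_ineq
   with u = g t - average of g on [0,t]. *)
Lemma average_barrier_slope mu nu g t : nu <= mu -> 0 < t ->
  average_barrier mu nu g t * (nu + (mu - nu) * (t ^ 2 / (t ^ 2 + 1)) + g t - RInt g 0 t / t) / t
    <= hinv_rate mu nu g t / t.
Proof.
  intros hnm ht.
  set (L := Rpower t nu * Rpower (t ^ 2 + 1) ((mu - nu) / 2) * exp (RInt g 0 t / t)).
  assert (hL : 0 < L) by (unfold L; repeat apply Rmult_lt_0_compat; apply exp_pos).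
  assert (hbarrier : average_barrier mu nu g t = exp (- (mu - 1)) * L)
    by (unfold average_barrier, L; ring).
  set (u := g t - RInt g 0 t / t).
  assert (hrate : hinv_rate mu nu g t = L * exp u).
  { unfold hinv_rate, L, u. rewrite !Rmult_assoc, <- !exp_plus. do 3 f_equal. ring. }
  set (s := t ^ 2 / (t ^ 2 + 1)).
  assert (hs : 0 <= s <= 1).
  { unfold s. split; [apply Rmult_le_pos; [nra | apply Rlt_le, Rinv_0_lt_compat; nra]|].
    apply Rmult_le_reg_r with (t ^ 2 + 1); [nra|]. unfold Rdiv.
    rewrite Rmult_assoc, Rinv_l by nra. nra. }
  rewrite hrate, hbarrier. unfold Rdiv.
  apply Rmult_le_compat_r; [apply Rlt_le, Rinv_0_lt_compat; lra|].
  set (r := RInt g 0 t : R) in *.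
  replace (exp (- (mu - 1)) * L * (nu + (mu - nu) * s + g t - r * / t))
    with (L * (exp (- (mu - 1)) * (nu + (mu - nu) * s + u))) by (unfold u, Rdiv; ring).
  apply Rmult_le_compat_l; [lra | apply average_weight_ineq; assumption].
Qed.

Lemma hinv_ge_average_profile mu nu g H N x : 0 < nu <= mu -> continuity g ->
  (forall t, Rabs (g t) <= N) -> is_hinv mu nu g H -> 0 < x ->
  average_barrier mu nu g x <= H x.
Proof.
  intros hnu hg hN hH hx.
  apply (compare_from_zero (average_barrier mu nu g) H
    (fun t => average_barrier mu nu g t
                * (nu + (mu - nu) * (t ^ 2 / (t ^ 2 + 1)) + g t - RInt g 0 t / t) / t)
    (fun t => hinv_rate mu nu g t / t) x hx).
  - apply (vanishes_of_power_bound _ nu (exp (- (mu - 1)) * Rpower 2 ((mu - nu) / 2) * exp N));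
      [lra | apply Rlt_le; repeat apply Rmult_lt_0_compat; apply exp_pos |].
    intros e he. apply average_barrier_small; [lra | exact hg | exact hN | exact he].
  - exact (hinv_vanishes mu nu g H hH).
  - intros t ht. split; [|split].
    + apply average_barrier_derive; [exact hg | lra].
    + apply hinv_derive; [exact hH | lra].
    + apply average_barrier_slope; lra.
Qed.

Lemma hinv_le_sup mu nu g H N x : 0 < nu <= mu -> (forall t, g t <= N) ->
  is_hinv mu nu g H -> 0 < x ->
  H x <= / nu * Rpower x nu * Rpower (x ^ 2 + 1) ((mu - nu) / 2) * exp N.
Proof.
  intros hnu hN hH hx.
  replace (/ nu * Rpower x nu * Rpower (x ^ 2 + 1) ((mu - nu) / 2) * exp N)
    with (Rpower (x ^ 2 + 1) ((mu - nu) / 2) * exp N / nu * Rpower x nu) by (field; lra).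
  apply (hinv_le_power mu nu g H hH); [lra | exact hx |].
  intros t ht. unfold hinv_rate. rewrite (Rmult_comm _ (Rpower t nu)), !Rmult_assoc.
  apply Rmult_le_compat_l; [apply Rlt_le, Rpower_pos|].
  apply Rmult_le_compat; try (apply Rlt_le, exp_pos).
  - apply Rle_Rpower_l; [lra | nra].
  - apply exp_le, hN.
Qed.

Lemma hinv_sup_bounds_pos mu nu g H N y : 0 < nu <= mu -> continuity g ->
  (forall t, Rabs (g t) <= N) -> is_hinv mu nu g H -> 0 < y ->
  H y <= / nu * Rpower y nu * Rpower (y ^ 2 + 1) ((mu - nu) / 2) * exp N /\
  exp (- (mu - 1)) * Rpower y nu * Rpower (y ^ 2 + 1) ((mu - nu) / 2)
    * exp (RInt g 0 y / y) <= H y /\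
  exp (- (mu - 1)) * Rpower y nu * Rpower (y ^ 2 + 1) ((mu - nu) / 2) * exp (- N)
    <= exp (- (mu - 1)) * Rpower y nu * Rpower (y ^ 2 + 1) ((mu - nu) / 2)
         * exp (RInt g 0 y / y).
Proof.
  intros hnu hg hN hH hy. split; [|split].
  - apply (hinv_le_sup mu nu g H N y hnu); [|exact hH | exact hy].
    intros t. specialize (hN t). apply Rabs_le_between in hN. lra.
  - exact (hinv_ge_average_profile mu nu g H N y hnu hg hN hH hy).
  - apply Rmult_le_compat_l.
    + apply Rlt_le. repeat apply Rmult_lt_0_compat; apply exp_pos.
    + apply exp_le. pose proof (average_bound g hg N y hN hy) as hb.
      apply Rabs_le_between in hb. lra.
Qed.

Lemma hinv_sup_bounds mu nu g (hg : continuity g) H N x : 0 < nu <= mu ->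
  (forall t, Rabs (g t) <= N) -> is_hinv mu nu g H ->
  Rabs (H x) <= / nu * powabs x nu * Rpower (x ^ 2 + 1) ((mu - nu) / 2) * exp N /\
  exp (- (mu - 1)) * powabs x nu * Rpower (x ^ 2 + 1) ((mu - nu) / 2)
    * exp (avg0 g hg x) <= Rabs (H x) /\
  exp (- (mu - 1)) * powabs x nu * Rpower (x ^ 2 + 1) ((mu - nu) / 2) * exp (- N)
    <= exp (- (mu - 1)) * powabs x nu * Rpower (x ^ 2 + 1) ((mu - nu) / 2)
         * exp (avg0 g hg x).
Proof.
  intros hnu hN hH.
  assert (hprofile_pos : forall y b a,
    0 < exp (- (mu - 1)) * Rpower y nu * Rpower b ((mu - nu) / 2) * exp a).
  { intros y b a. repeat apply Rmult_lt_0_compat; apply exp_pos. }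
  destruct (Rtotal_order x 0) as [hx | [-> | hx]].
  - set (g' := fun t => g (- t)).
    assert (hg' : continuity g').
    { intros t. apply continuity_pt_comp; [apply continuity_pt_opp, continuity_pt_id | apply hg]. }
    destruct (hinv_sup_bounds_pos mu nu g' (fun t => - H (- t)) N (- x) hnu hg'
                (fun t => hN (- t)) (hinv_reflect mu nu g g' H (fun t => eq_refl) hH)
                ltac:(lra)) as [hup [hlow havg]].
    rewrite Ropp_involutive in hup, hlow.
    replace ((- x) ^ 2) with (x ^ 2) in hup, hlow, havg by ring.
    unfold g' in hlow, havg. rewrite RInt_reflect in hlow, havg by exact hg.
    replace (- RInt g 0 x / - x) with (RInt g 0 x / x) in hlow, havg by (field; lra).
    rewrite average_eq, <- (powabs_opp x), powabs_pos by lra.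
    pose proof (hprofile_pos (- x) (x ^ 2 + 1) (RInt g 0 x / x)).
    rewrite Rabs_left by lra. auto.
  - unfold powabs. destruct (Req_EM_T 0 0) as [_ | ]; [|lra].
    destruct hH as [h0 _]. rewrite h0, Rabs_R0. repeat split; right; ring.
  - destruct (hinv_sup_bounds_pos mu nu g H N x hnu hg hN hH hx) as [hup [hlow havg]].
    rewrite average_eq, powabs_pos by lra.
    pose proof (hprofile_pos x (x ^ 2 + 1) (RInt g 0 x / x)).
    rewrite Rabs_right by lra. auto.
Qed.

Lemma hinv_rate_Gfun mu nu g t :
  hinv_rate mu nu g t = Rpower t nu * exp (Gfun mu nu g t).
Proof.
  unfold hinv_rate, Gfun, Rpower. rewrite Rmult_assoc, <- exp_plus. f_equal. f_equal. field.
Qed.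

(* Comparison of the constants of part (2), from e^(1-mu) <= 1/mu and mu >= nu. *)
Lemma exp_profile_constant mu nu : 0 < mu -> nu <= mu ->
  exp (1 - nu - 6 * (mu - nu)) <= / mu * exp (- (2 * (mu - nu))).
Proof.
  intros hmu hnm.
  assert (h1 : exp (1 - mu) <= / mu).
  { apply Rmult_le_reg_l with (exp (mu - 1)); [apply exp_pos|].
    rewrite <- exp_plus. replace (mu - 1 + (1 - mu)) with 0 by ring. rewrite exp_0.
    pose proof (exp_ineq1_le (mu - 1)).
    apply Rmult_le_reg_r with mu; [exact hmu|].
    rewrite Rmult_assoc, Rinv_l by lra. nra. }
  replace (1 - nu - 6 * (mu - nu)) with ((1 - mu) + - (2 * (mu - nu)) + - (3 * (mu - nu)))
    by ring.
  rewrite !exp_plus.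
  assert (h3 : exp (- (3 * (mu - nu))) <= 1) by (rewrite <- exp_0; apply exp_le; lra).
  pose proof (exp_pos (1 - mu)). pose proof (exp_pos (- (2 * (mu - nu)))).
  apply Rle_trans with (exp (1 - mu) * exp (- (2 * (mu - nu)))).
  - rewrite <- (Rmult_1_r (exp (1 - mu) * _)) at 2. apply Rmult_le_compat_l; nra.
  - apply Rmult_le_compat_r; lra.
Qed.

Lemma hinv_le_rate mu nu g H x : 0 < nu -> is_hinv mu nu g H -> 0 < x ->
  (forall t, 0 < t <= x -> Gfun mu nu g t <= Gfun mu nu g x) ->
  H x <= / nu * hinv_rate mu nu g x.
Proof.
  intros hnu hH hx hG.
  rewrite hinv_rate_Gfun.
  replace (/ nu * (Rpower x nu * exp (Gfun mu nu g x)))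
    with (exp (Gfun mu nu g x) / nu * Rpower x nu) by (field; lra).
  apply (hinv_le_power mu nu g H hH); [exact hnu | exact hx |].
  intros t ht. rewrite hinv_rate_Gfun, Rmult_comm.
  apply Rmult_le_compat_r; [apply Rlt_le, Rpower_pos | apply exp_le, hG, ht].
Qed.

(* Part (2), lower bound for x > 0: the growth bound G x - G t <= (mu-
   nu)(ln(x/t) + 2) makes hinv_rate dominate a multiple of t^mu on (0,x]. *)
Lemma rate_le_hinv mu nu g H x : 0 < mu -> is_hinv mu nu g H -> 0 < x ->
  (forall t, 0 < t <= x -> Gfun mu nu g x - Gfun mu nu g t <= (mu - nu) * (ln (x / t) + 2)) ->
  / mu * exp (- (2 * (mu - nu))) * hinv_rate mu nu g x <= H x.
Proof.
  intros hmu hH hx hG.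
  set (m := exp (Gfun mu nu g x - (mu - nu) * ln x - 2 * (mu - nu))).
  assert (hm : m * Rpower x mu = exp (- (2 * (mu - nu))) * (Rpower x nu * exp (Gfun mu nu g x))).
  { unfold m, Rpower. rewrite <- !exp_plus. f_equal. ring. }
  replace (/ mu * exp (- (2 * (mu - nu))) * hinv_rate mu nu g x) with (m / mu * Rpower x mu)
    by (rewrite hinv_rate_Gfun; unfold Rdiv; rewrite Rmult_assoc, (Rmult_comm (/ mu)),
          <- Rmult_assoc, hm; ring).
  apply (power_le_hinv mu nu g H hH); [exact hmu | exact hx |].
  intros t ht. rewrite hinv_rate_Gfun. unfold m, Rpower. rewrite <- !exp_plus.
  apply exp_le. specialize (hG t ht). rewrite ln_div in hG by lra. lra.
Qed.

Lemma hinv_ratio_bounds_pos mu nu g H y : 0 < nu <= mu ->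
  (forall x t, 0 <= t -> t <= x ->
     0 <= Gfun mu nu g x - Gfun mu nu g t /\
     (0 < t -> Gfun mu nu g x - Gfun mu nu g t <= (mu - nu) * (ln (x / t) + 2))) ->
  is_hinv mu nu g H -> 0 < y ->
  exp (1 - nu - 6 * (mu - nu)) * powabs y (nu - 1) * Rpower (y ^ 2 + 1) ((mu - nu) / 2)
    * exp (g y) <= H y / y /\
  H y / y <= / nu * powabs y (nu - 1) * Rpower (y ^ 2 + 1) ((mu - nu) / 2) * exp (g y).
Proof.
  intros hnu hG hH hy.
  assert (hform : forall c, c * powabs y (nu - 1) * Rpower (y ^ 2 + 1) ((mu - nu) / 2)
                               * exp (g y) = c * (hinv_rate mu nu g y / y)).
  { intros c. rewrite <- hinv_rate_eq by exact hy. ring. }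
  rewrite !hform.
  assert (hlow : exp (1 - nu - 6 * (mu - nu)) * hinv_rate mu nu g y <= H y).
  { apply Rle_trans with (/ mu * exp (- (2 * (mu - nu))) * hinv_rate mu nu g y).
    - apply Rmult_le_compat_r; [apply Rlt_le; unfold hinv_rate;
        repeat apply Rmult_lt_0_compat; apply exp_pos|].
      apply exp_profile_constant; lra.
    - apply rate_le_hinv; [lra | exact hH | exact hy |].
      intros t ht. apply (hG y t); lra. }
  assert (hup : H y <= / nu * hinv_rate mu nu g y).
  { apply hinv_le_rate; [lra | exact hH | exact hy |].
    intros t ht. destruct (hG y t) as [hmono _]; lra. }
  unfold Rdiv. rewrite <- !Rmult_assoc.
  split; apply Rmult_le_compat_r; try assumption; apply Rlt_le, Rinv_0_lt_compat; exact hy.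
Qed.

(* Part (2) for all x <> 0: g is even, so negative x follow by reflection. *)
Lemma hinv_ratio_bounds mu nu g H x : 0 < nu <= mu -> inX1 mu nu g -> is_hinv mu nu g H ->
  x <> 0 ->
  exp (1 - nu - 6 * (mu - nu)) * powabs x (nu - 1) * Rpower (x ^ 2 + 1) ((mu - nu) / 2)
    * exp (g x) <= H x / x /\
  H x / x <= / nu * powabs x (nu - 1) * Rpower (x ^ 2 + 1) ((mu - nu) / 2) * exp (g x).
Proof.
  intros hnu [_ [hsym hG]] hH hx.
  destruct (Rle_or_lt x 0) as [hneg | hpos];
    [| exact (hinv_ratio_bounds_pos mu nu g H x hnu hG hH hpos)].
  assert (heven : forall t, g t = g (- t)).
  { intros t. specialize (hsym t). unfold Gfun in hsym.
    replace ((- t) ^ 2) with (t ^ 2) in hsym by ring. lra. }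
  destruct (hinv_ratio_bounds_pos mu nu g (fun t => - H (- t)) (- x) hnu hG
              (hinv_reflect mu nu g g H heven hH) ltac:(lra)) as [hlow hup].
  rewrite Ropp_involutive, powabs_opp, <- heven in hlow, hup.
  replace ((- x) ^ 2) with (x ^ 2) in hlow, hup by ring.
  replace (- H x / - x) with (H x / x) in hlow, hup by (field; exact hx).
  split; assumption.
Qed.

Theorem lemma5p2 (mu nu : R) (Hmu : 1 / 2 < mu) (Hnu0 : 0 < nu) (Hnu1 : nu < 1 / 2) :
  (forall (g : R -> R) (hX : inX g) (H : R -> R) (N : R),
     is_hinv mu nu g H -> is_supnorm g N ->
     forall x : R,
       Rabs (H x) <= / nu * powabs x nu * Rpower (x ^ 2 + 1) ((mu - nu) / 2) * exp N /\
       exp (- (mu - 1)) * powabs x nu * Rpower (x ^ 2 + 1) ((mu - nu) / 2)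
         * exp (avg0 g (inX_cont g hX) x) <= Rabs (H x) /\
       exp (- (mu - 1)) * powabs x nu * Rpower (x ^ 2 + 1) ((mu - nu) / 2) * exp (- N)
         <= exp (- (mu - 1)) * powabs x nu * Rpower (x ^ 2 + 1) ((mu - nu) / 2)
              * exp (avg0 g (inX_cont g hX) x)) /\
  (forall (g : R -> R) (H : R -> R),
     inX1 mu nu g -> is_hinv mu nu g H ->
     forall x : R, x <> 0 ->
       exp (1 - nu - 6 * (mu - nu)) * powabs x (nu - 1) * Rpower (x ^ 2 + 1) ((mu - nu) / 2)
         * exp (g x) <= H x / x /\
       H x / x <= / nu * powabs x (nu - 1) * Rpower (x ^ 2 + 1) ((mu - nu) / 2) * exp (g x)).
Proof.
  assert (hnu : 0 < nu <= mu) by lra.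
  split.
  - intros g hX H N hH [hsup _] x.
    apply hinv_sup_bounds; [exact hnu | | exact hH].
    intros t. apply hsup. exists t. reflexivity.
  - intros g H hX1 hH x hx. exact (hinv_ratio_bounds mu nu g H x hnu hX1 hH hx).
Qed.
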